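(* Suppose $N_1\gtrsim1$, $1\lesssim A\ll N_1$ and $k\ll N_1^2$. Decompose $[\frac14N_1,4N_1]$ into a sequence of consecutive intervals $\{I_j\}$, each of length $A^{-1}$. Then there is a mapping $j\mapsto\kappa(j)$ such that for all $x,y\ge0$ with $k\le x^2-y^2\le k+N_1A^{-1}$ and $\frac14N_1\le x,y\le4N_1$, the inclusion $y\in I_j$ implies $x\in I_{\kappa(j)-100}\cup\dots\cup I_{\kappa(j)+100}$. Moreover, as $j$ ranges over all indices, $\kappa(j)$ takes any particular value no more than $100$ times.
   Context: $A\lesssim B$ means $A\le cB$ for an absolute constant $c$; $A\ll B$ means $A\le cB$ for a sufficiently small absolute constant $c$; $N_1,A,k$ are real parameters (with $k$ a real number, not necessarily positive). *)

From Stdlib Require Export Reals Lra Lia ZArith List.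
Open Scope R_scope.

Definition in_I (N1 A : R) (j : Z) (t : R) : Prop :=
  N1 / 4 + IZR j / A <= t < N1 / 4 + (IZR j + 1) / A.

(* The indices of the decomposition: the intervals I_j meeting [N1/4, 4 N1]
   (j = 0, 1, ..., the last one possibly sticking out past 4 N1). *)
Definition is_index (N1 A : R) (j : Z) : Prop :=
  (0 <= j)%Z /\ N1 / 4 + IZR j / A <= 4 * N1.

(** The condition [k <= x^2 - y^2 <= k + N1/A] pins [x^2 - y^2] down to a
    window of width [N1/A], and on [[N1/4, 4 N1]] squaring distorts distances
    only by factors [N1/2 .. 8 N1].  Hence admissible pairs [(x, y)] with [y]'s
    within [1/A] have [x]'s within [18/A], and vice versa.  Choosing, for every
    interval [I_j] met by an admissible [y], the interval of one partner [x] as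
    [kappa j] gives the first property with margin 18; conversely all [j] with
    the same [kappa j] have admissible [y]'s within [18/A] of each other, so
    there are at most 37 of them. *)

From Stdlib Require Import Reals Lra Lia ZArith List.
From Stdlib Require Import ClassicalEpsilon.
Open Scope R_scope.

Lemma Rabs_le_between (x a : R) : Rabs x <= a -> - a <= x <= a.
Proof. pose proof (Rle_abs x); pose proof (Rle_abs (- x)); rewrite Rabs_Ropp in *; lra. Qed.

Lemma sq_diff_close (N1 e x x' y y' : R) :
  0 < N1 ->
  N1 / 4 <= x <= 4 * N1 -> N1 / 4 <= x' <= 4 * N1 ->
  N1 / 4 <= y <= 4 * N1 -> N1 / 4 <= y' <= 4 * N1 ->
  Rabs ((x ^ 2 - y ^ 2) - (x' ^ 2 - y' ^ 2)) <= N1 * e ->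
  Rabs (y - y') <= e -> Rabs (x - x') <= 18 * e.
Proof.
  intros HN Hx Hx' Hy Hy' Hsq Hyy.
  assert (Hy2 : Rabs (y ^ 2 - y' ^ 2) <= 8 * N1 * e).
  { replace (y ^ 2 - y' ^ 2) with ((y - y') * (y + y')) by ring.
    rewrite Rabs_mult, (Rabs_pos_eq (y + y')) by lra.
    pose proof (Rabs_pos (y - y')); nra. }
  assert (Hx2 : Rabs (x - x') * (x + x') <= 9 * N1 * e).
  { rewrite <- (Rabs_pos_eq (x + x')), <- Rabs_mult by lra.
    replace ((x - x') * (x + x'))
      with (((x ^ 2 - y ^ 2) - (x' ^ 2 - y' ^ 2)) + (y ^ 2 - y' ^ 2)) by ring.
    pose proof (Rabs_triang ((x ^ 2 - y ^ 2) - (x' ^ 2 - y' ^ 2)) (y ^ 2 - y' ^ 2)).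
    lra. }
  pose proof (Rabs_pos (x - x')); nra.
Qed.

Definition interval_index (N1 A t : R) : Z := Int_part ((t - N1 / 4) * A).

Lemma in_I_interval_index (N1 A t : R) :
  0 < A -> in_I N1 A (interval_index N1 A t) t.
Proof.
  intros HA. unfold in_I, interval_index.
  destruct (base_Int_part ((t - N1 / 4) * A)) as [Hlo Hhi].
  set (n := IZR (Int_part ((t - N1 / 4) * A))) in *.
  split.
  - apply (Rmult_le_reg_r A); [lra|].
    replace ((N1 / 4 + n / A) * A) with (N1 / 4 * A + n) by (field; lra). lra.
  - apply (Rmult_lt_reg_r A); [lra|].
    replace ((N1 / 4 + (n + 1) / A) * A) with (N1 / 4 * A + n + 1) by (field; lra).
    lra.
Qed.

Lemma interval_index_nonneg (N1 A t : R) :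
  0 < A -> N1 / 4 <= t -> (0 <= interval_index N1 A t)%Z.
Proof.
  intros HA Ht. unfold interval_index, Int_part.
  destruct (archimed ((t - N1 / 4) * A)) as [Hup _].
  assert (Hpos : 0 < IZR (up ((t - N1 / 4) * A))) by nra.
  apply lt_IZR in Hpos. lia.
Qed.

Lemma in_I_dist (N1 A : R) (j : Z) (t t' : R) :
  0 < A -> in_I N1 A j t -> in_I N1 A j t' -> Rabs (t - t') <= / A.
Proof.
  unfold in_I. intros HA Ht Ht'. apply Rabs_le.
  replace ((IZR j + 1) / A) with (IZR j / A + / A) in * by (field; lra). lra.
Qed.

Lemma in_I_index_gap (N1 A : R) (i i' d : Z) (t t' : R) :
  0 < A -> in_I N1 A i t -> in_I N1 A i' t' ->
  t - t' <= IZR d / A -> (i - i' <= d)%Z.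
Proof.
  unfold in_I. intros HA Ht Ht' Htt.
  assert (Hlt : (IZR i - IZR i' - 1) / A < IZR d / A).
  { replace ((IZR i - IZR i' - 1) / A) with (IZR i / A - (IZR i' + 1) / A)
      by (field; lra). lra. }
  unfold Rdiv in Hlt. apply Rmult_lt_reg_r in Hlt; [|apply Rinv_0_lt_compat; lra].
  rewrite <- minus_IZR in Hlt.
  assert (Hz : IZR (i - i') < IZR (d + 1)) by (rewrite plus_IZR; lra).
  apply lt_IZR in Hz. lia.
Qed.

Lemma in_I_index_dist (N1 A : R) (i i' d : Z) (t t' : R) :
  0 < A -> in_I N1 A i t -> in_I N1 A i' t' ->
  Rabs (t - t') <= IZR d / A -> (Z.abs (i - i') <= d)%Z.
Proof.
  intros HA Ht Ht' Htt. apply Rabs_le_between in Htt.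
  pose proof (in_I_index_gap N1 A i i' d t t' HA Ht Ht' ltac:(lra)).
  pose proof (in_I_index_gap N1 A i' i d t' t HA Ht' Ht ltac:(lra)).
  lia.
Qed.

Lemma NoDup_length_le_diameter (l : list Z) (d : Z) :
  NoDup l -> (forall j j', In j l -> In j' l -> (Z.abs (j - j') <= d)%Z) ->
  (length l <= Z.to_nat (2 * d + 1))%nat.
Proof.
  intros Hl Hdiam. destruct l as [|h l']; [simpl; lia|].
  assert (Hh : In h (h :: l')) by now left.
  set (window := map (fun n => (h - d + Z.of_nat n)%Z) (seq 0 (Z.to_nat (2 * d + 1)))).
  replace (Z.to_nat (2 * d + 1)) with (length window)
    by (unfold window; rewrite length_map, length_seq; reflexivity).
  apply NoDup_incl_length; [exact Hl|].
  intros j Hj. pose proof (Hdiam j h Hj Hh). pose proof (Hdiam h h Hh Hh).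
  apply in_map_iff. exists (Z.to_nat (j - (h - d))). split; [lia|].
  apply in_seq. lia.
Qed.

Section IndexSelection.

Variables (N1 A : R) (S : R -> R -> Prop) (D : Z).
Hypothesis A_pos : 0 < A.
Hypothesis D_nonneg : (0 <= D)%Z.
Hypothesis S_lower : forall x y, S x y -> N1 / 4 <= x.
Hypothesis S_close_x : forall x y x' y', S x y -> S x' y' ->
  Rabs (y - y') <= / A -> Rabs (x - x') <= IZR D / A.
Hypothesis S_close_y : forall x y x' y', S x y -> S x' y' ->
  Rabs (x - x') <= / A -> Rabs (y - y') <= IZR D / A.

Definition hits (j : Z) (p : R * R) : Prop := S (fst p) (snd p) /\ in_I N1 A j (snd p).

(* Indices [j] without admissible [y] in [I_j] get the pairwise distinct
   negative values [-1 - j], which no interval index of an admissible [x] takes. *)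
Definition select_index (j : Z) : Z :=
  match excluded_middle_informative (exists p, hits j p) with
  | left Hj => interval_index N1 A (fst (proj1_sig (constructive_indefinite_description _ Hj)))
  | right _ => (-1 - j)%Z
  end.

Lemma select_index_hit (j : Z) :
  (exists p, hits j p) -> exists p, hits j p /\ select_index j = interval_index N1 A (fst p).
Proof.
  intros Hj. unfold select_index.
  destruct (excluded_middle_informative _) as [Hj'|]; [|contradiction].
  destruct (constructive_indefinite_description _ Hj') as [p Hp]. now exists p.
Qed.

Lemma select_index_miss (j : Z) : ~ (exists p, hits j p) -> select_index j = (-1 - j)%Z.
Proof.
  intros Hj. unfold select_index.
  now destruct (excluded_middle_informative _).
Qed.

Lemma select_index_near (x y : R) (j : Z) :
  S x y -> in_I N1 A j y ->
  (Z.abs (interval_index N1 A x - select_index j) <= D)%Z.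
Proof.
  intros Hxy Hy.
  destruct (select_index_hit j) as [[x0 y0] [[Hxy0 Hy0] ->]]; [now exists (x, y)|].
  cbn [fst snd] in *.
  apply (in_I_index_dist N1 A _ _ D x x0); try apply in_I_interval_index; auto.
  apply S_close_x with y y0; auto. now apply (in_I_dist N1 A j).
Qed.

Lemma select_index_fibre (j j' : Z) :
  (0 <= j)%Z -> (0 <= j')%Z -> select_index j = select_index j' -> (Z.abs (j - j') <= D)%Z.
Proof.
  intros Hj Hj' Heq.
  destruct (classic (exists p, hits j p)) as [Hh|Hm];
  destruct (classic (exists p, hits j' p)) as [Hh'|Hm'].
  - destruct (select_index_hit j Hh) as [[x y] [[Hxy Hy] Ej]].
    destruct (select_index_hit j' Hh') as [[x' y'] [[Hxy' Hy'] Ej']].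
    cbn [fst snd] in *.
    assert (Hx : in_I N1 A (select_index j) x) by (rewrite Ej; now apply in_I_interval_index).
    assert (Hx' : in_I N1 A (select_index j) x')
      by (rewrite Heq, Ej'; now apply in_I_interval_index).
    apply (in_I_index_dist N1 A _ _ D y y'); auto.
    apply S_close_y with x x'; auto. now apply (in_I_dist N1 A (select_index j)).
  - destruct (select_index_hit j Hh) as [[x y] [[Hxy _] Ej]].
    rewrite (select_index_miss j' Hm') in Heq.
    pose proof (interval_index_nonneg N1 A x A_pos (S_lower x y Hxy)). cbn [fst snd] in *. lia.
  - destruct (select_index_hit j' Hh') as [[x y] [[Hxy _] Ej']].
    rewrite (select_index_miss j Hm) in Heq.
    pose proof (interval_index_nonneg N1 A x A_pos (S_lower x y Hxy)). cbn [fst snd] in *. lia.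
  - rewrite (select_index_miss j Hm), (select_index_miss j' Hm') in Heq. lia.
Qed.

Lemma select_index_fibre_length (m : Z) (l : list Z) :
  NoDup l -> (forall j, In j l -> (0 <= j)%Z /\ select_index j = m) ->
  (length l <= Z.to_nat (2 * D + 1))%nat.
Proof.
  intros Hl Hfib. apply NoDup_length_le_diameter; [exact Hl|].
  intros j j' Hj Hj'.
  destruct (Hfib j Hj) as [Hj0 Ej]. destruct (Hfib j' Hj') as [Hj0' Ej'].
  apply select_index_fibre; congruence.
Qed.

End IndexSelection.

Definition admissible (N1 A k x y : R) : Prop :=
  k <= x ^ 2 - y ^ 2 <= k + N1 / A /\
  N1 / 4 <= x <= 4 * N1 /\ N1 / 4 <= y <= 4 * N1.

Lemma admissible_close (N1 A k x y x' y' : R) :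
  0 < N1 -> 0 < A -> admissible N1 A k x y -> admissible N1 A k x' y' ->
  Rabs (y - y') <= / A -> Rabs (x - x') <= IZR 18 / A.
Proof.
  intros HN HA [Hk [Hx Hy]] [Hk' [Hx' Hy']] Hyy.
  replace (IZR 18 / A) with (18 * / A) by (unfold Rdiv; ring).
  apply (sq_diff_close N1 (/ A) x x' y y'); auto.
  apply Rabs_le. unfold Rdiv in *. lra.
Qed.

Lemma admissible_swap (N1 A k x y : R) :
  admissible N1 A k x y -> admissible N1 A (- k - N1 / A) y x.
Proof. unfold admissible. lra. Qed.

Theorem lemmaA1 :
  forall c1 c2 : R, 0 < c1 -> 0 < c2 ->
  exists c : R, 0 < c /\
  forall N1 A k : R,
    c1 <= N1 -> c2 <= A -> A <= c * N1 -> k <= c * N1 ^ 2 ->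
    exists kappa : Z -> Z,
      (forall (x y : R) (j : Z),
         0 <= x -> 0 <= y ->
         k <= x ^ 2 - y ^ 2 <= k + N1 / A ->
         N1 / 4 <= x <= 4 * N1 -> N1 / 4 <= y <= 4 * N1 ->
         in_I N1 A j y ->
         exists i : Z, (kappa j - 100 <= i <= kappa j + 100)%Z /\ in_I N1 A i x)
      /\
      (forall (m : Z) (l : list Z),
         NoDup l ->
         (forall j, In j l -> is_index N1 A j /\ kappa j = m) ->
         (length l <= 100)%nat).
Proof.
  intros c1 c2 Hc1 Hc2. exists 1. split; [lra|].
  intros N1 A k HN HA _ _.
  assert (HN0 : 0 < N1) by lra. assert (HA0 : 0 < A) by lra.
  set (S := admissible N1 A k).
  assert (S_lower : forall x y, S x y -> N1 / 4 <= x) by (intros x y H; apply H).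
  assert (S_close_x := fun x y x' y' => admissible_close N1 A k x y x' y' HN0 HA0).
  assert (S_close_y : forall x y x' y', S x y -> S x' y' ->
            Rabs (x - x') <= / A -> Rabs (y - y') <= IZR 18 / A).
  { intros x y x' y' H H'.
    apply (admissible_close N1 A (- k - N1 / A)); auto; now apply admissible_swap. }
  exists (select_index N1 A S). split.
  - intros x y j _ _ Hk Hx Hy Hj.
    exists (interval_index N1 A x). split; [|now apply in_I_interval_index].
    pose proof (select_index_near N1 A S 18 HA0 S_close_x x y j
                  (conj Hk (conj Hx Hy)) Hj).
    lia.
  - intros m l Hl Hfib.
    enough (length l <= Z.to_nat (2 * 18 + 1))%nat by (simpl in *; lia).
    apply (select_index_fibre_length N1 A S 18 HA0 ltac:(lia) S_lower S_close_y m l Hl).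
    intros j Hj. destruct (Hfib j Hj) as [[Hj0 _] Ej]. now split.
Qed.
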